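(* Let $\Gamma:\mathbb{C}^4\to\mathbb{C}^4$ be a homogeneous polynomial map such that $(x,\Gamma(x))=0$ and $(\Gamma(x),\Gamma(x))=0$ for all $x\in C$. Then there is one of the two generating families $\mathcal P$ of planes in $C$ such that for every nonzero $x\in C$, the vector $\Gamma(x)$ lies in the unique plane of $\mathcal P$ containing $x$.
   Context: $(\cdot,\cdot)$ is the standard Euclidean inner product on $\mathbb{R}^4$ extended complex-bilinearly to $\mathbb{C}^4$, and $C=\{x\in\mathbb{C}^4:(x,x)=0\}$ is the asymptotic cone. The 2-dimensional complex linear subspaces (''planes'') contained in $C$ form two families, the *generating families of planes*: every nonzero $x\in C$ lies in exactly one plane of each family (these correspond to the two rulings of lines of the quadric surface $\mathbb{P}(C)\subset\mathbb{CP}^3$). *)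

From HB Require Import structures.
From mathcomp Require Import all_boot all_order all_algebra.
From mathcomp Require Import reals complex.
From mathcomp Require Import mpoly.
Set Implicit Arguments. Unset Strict Implicit. Unset Printing Implicit Defensive.
Import Order.TTheory GRing.Theory Num.Theory.
Local Open Scope ring_scope.

(* The standard Euclidean inner product on C^4, extended complex-bilinearly
   (no conjugation): (x, y) = sum_i x_i y_i. *)
Definition bform (R : realType) (x y : 'rV[R[i]]_4) : R[i] :=
  \sum_(k < 4) x 0 k * y 0 k.

Definition in_cone (R : realType) (x : 'rV[R[i]]_4) : Prop := bform x x = 0.

Definition cone_plane (R : realType) (W : 'M[R[i]]_4) : Prop :=
  \rank W = 2%N /\ forall x : 'rV[R[i]]_4, (x <= W)%MS -> in_cone x.

(* The generating family of planes containing the plane P0: planes W in C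
   with dim (W ∩ P0) even (i.e. W = P0 or W ∩ P0 = 0). The two generating
   families are exactly the classes [gen_family P0] as P0 ranges over
   planes in C. *)
Definition gen_family (R : realType) (P0 W : 'M[R[i]]_4) : Prop :=
  cone_plane W /\ ~~ odd (\rank (W :&: P0)%MS).

Definition polymap_eval (R : realType) (G : 'I_4 -> {mpoly R[i][4]})
  (x : 'rV[R[i]]_4) : 'rV[R[i]]_4 :=
  \row_(k < 4) (G k).@[fun j => x 0 j].

(* Under the spinor map x |-> X = [[x0 + i x1, x2 + i x3], [i x3 - x2, x0 - i x1]]
   one has (x, x) = det X and 2 (x, y) = tr (adj X * Y), so a nonzero isotropic x
   is a rank-one matrix u v^T, and the two planes of C through x are
   {y | adj X * Y = 0} (column space in span u) and {y | Y * adj X = 0} (row space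
   in span v).  If N = Gamma x, the 2x2 identity
   adj A B E B adj A = tr (B E) (tr (adj A B) adj A - det A adj B) - det B adj A adj E adj A
   kills every product of an entry of adj X N with an entry of N adj X, so N lies in
   one of the two planes through x.  The side cannot change along the cone: joining
   two isotropic vectors by a polynomial path of rank-one matrices turns both
   conditions into polynomial matrices, and {poly C} is a domain.  Finally a cone
   plane through x lies in the family of a reference plane of side b exactly when it
   is the b-plane through x, which is totally isotropic and hence contains N. *)

From HB Require Import structures.
From mathcomp Require Import all_boot all_order all_algebra.
From mathcomp Require Import reals complex.
From mathcomp Require Import mpoly.
From mathcomp Require Import ring.
From Stdlib Require Import Classical.
Set Implicit Arguments. Unset Strict Implicit. Unset Printing Implicit Defensive.
Import Order.TTheory GRing.Theory Num.Theory.
Local Open Scope ring_scope.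

Lemma ord2P (a : 'I_2) : a = 0 \/ a = 1.
Proof. by case: a => [[|[|//]] ?]; [left | right]; apply: val_inj. Qed.

Lemma ord4P (k : 'I_4) : [\/ k = 0, k = 1, k = 2 | k = 3].
Proof.
by case: k => [[|[|[|[|//]]]] ?]; [constructor 1|constructor 2|constructor 3|constructor 4];
  apply: val_inj.
Qed.

Lemma big_ord2 (V : nmodType) (F : 'I_2 -> V) : \sum_(k < 2) F k = F 0 + F 1.
Proof. by rewrite !big_ord_recl big_ord0 addr0; congr (_ + F _); apply: val_inj. Qed.

Lemma big_ord4 (V : nmodType) (F : 'I_4 -> V) :
  \sum_(k < 4) F k = F 0 + F 1 + F 2 + F 3.
Proof.
rewrite !big_ord_recl big_ord0 addr0 !addrA.
by congr (_ + F _ + F _ + F _); apply: val_inj.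
Qed.

Lemma mul_delta_mx_entry (R : pzRingType) m n p q (P : 'M[R]_(m, n)) (Q : 'M[R]_(p, q))
    i j k l :
  (P *m delta_mx j k *m Q) i l = P i j * Q k l.
Proof.
by rewrite -(mul_delta_mx (0 : 'I_1)) mulmxA -colE -mulmxA -rowE !mxE big_ord1 !mxE.
Qed.

Section Mx2.
Variable R : comRingType.
Implicit Types A B E : 'M[R]_2.

Lemma det_mx2 A : \det A = A 0 0 * A 1 1 - A 0 1 * A 1 0.
Proof.
rewrite (expand_det_row _ 0) big_ord2 /cofactor !det_mx11 !mxE /=.
have -> : lift 0 0 = 1 :> 'I_2 by apply: val_inj.
have -> : lift 1 0 = 0 :> 'I_2 by apply: val_inj.
by rewrite expr0 expr1 !mul1r mulN1r mulrN.
Qed.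

Lemma adj_mx2 A : \adj A = (\tr A)%:M - A.
Proof.
apply/matrixP => a b; rewrite !mxE /cofactor det_mx11 /mxtrace big_ord2.
have l01 : lift 0 0 = 1 :> 'I_2 by apply: val_inj.
have l10 : lift 1 0 = 0 :> 'I_2 by apply: val_inj.
by have [->|->] := ord2P a; have [->|->] := ord2P b;
  rewrite !mxE ?l01 ?l10 /= ?modn_small //; ring.
Qed.

Local Ltac mx2_ring :=
  apply/matrixP => a b; rewrite ?adj_mx2 ?det_mx2 /mxtrace;
  have [->|->] := ord2P a; have [->|->] := ord2P b;
  rewrite !(big_ord2, mxE) /=; ring.

Lemma det_adj_mx2 A : \det (\adj A) = \det A.
Proof. by rewrite adj_mx2 !det_mx2 /mxtrace big_ord2 !mxE /=; ring. Qed.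

Lemma adjK_mx2 A : \adj (\adj A) = A.
Proof. by rewrite [\adj (\adj A)]adj_mx2; mx2_ring. Qed.

Lemma mx2_sandwich B E : B *m E *m B = \tr (B *m E) *: B - \det B *: \adj E.
Proof. by mx2_ring. Qed.

Lemma det_mx2_col_row (u : 'cV[R]_2) (v : 'rV[R]_2) : \det (u *m v) = 0.
Proof. by rewrite det_mx2 !mxE !big_ord1; ring. Qed.

Lemma det_mx2_row0 A : row 0 A = 0 -> \det A = 0.
Proof. by move=> /rowP A0; have := (A0 0, A0 1); rewrite det_mx2 !mxE => -[-> ->]; ring. Qed.

Lemma adj_mulmx_row0_eq0 A B : row 0 A = 0 -> row 0 B = 0 -> \adj A *m B = 0.
Proof.
move=> /rowP A0 /rowP B0; have := (A0 0, A0 1, B0 0, B0 1); rewrite !mxE.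
case=> [[[a00 a01] b00] b01]; apply/matrixP => a b; rewrite adj_mx2 /mxtrace.
by have [->|->] := ord2P a; have [->|->] := ord2P b;
  rewrite !(big_ord2, mxE) /= ?a00 ?a01 ?b00 ?b01; ring.
Qed.

End Mx2.

Section Mx2Domain.
Variable R : idomainType.
Implicit Types A B : 'M[R]_2.

Lemma mx2_null_pair A B :
  \det A = 0 -> \det B = 0 -> \tr (\adj A *m B) = 0 ->
  \adj A *m B = 0 \/ B *m \adj A = 0.
Proof.
move=> dA dB tAB.
have sandwich E : \adj A *m B *m E *m (B *m \adj A) = 0.
  rewrite -!mulmxA (mulmxA B) (mulmxA (B *m E)) mx2_sandwich dB scale0r subr0.
  rewrite -scalemxAl -scalemxAr mulmxA.
  by rewrite mx2_sandwich det_adj_mx2 dA tAB !scale0r subr0 scaler0.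
have [|nzP] := eqVneq (\adj A *m B) 0; [by left | right].
have /existsP[[i j] /= Pij] : [exists ij, (\adj A *m B) ij.1 ij.2 != 0].
  apply: contraR nzP => /existsPn P0; apply/eqP/matrixP => i j.
  by rewrite [RHS]mxE; apply/eqP; have := P0 (i, j); rewrite negbK.
apply/matrixP => k l; rewrite [RHS]mxE.
(* Entry (i, l) of the sandwich for E = delta_mx j k is (adj A B) i j * (B adj A) k l. *)
have /matrixP/(_ i l)/eqP := sandwich (delta_mx j k).
by rewrite mul_delta_mx_entry [X in _ == X]mxE mulf_eq0 (negPf Pij) => /eqP.
Qed.

Lemma mx2_adj_mulmx_det0 A B : A != 0 -> \adj A *m B = 0 -> \det B = 0.
Proof.
move=> nzA AB0; have /eqP : \det B *: \adj A = 0.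
  by rewrite -mul_scalar_mx -scalar_mxC -mul_mx_adj mulmxA AB0 mul0mx.
rewrite scalemx_eq0 => /orP[/eqP // | /eqP adjA0].
by move: nzA; rewrite -[A]adjK_mx2 adjA0 adj_mx2 mxtrace0 raddf0 subr0 eqxx.
Qed.

End Mx2Domain.

Lemma mx2_row0_dependent (F : fieldType) (A B : 'M[F]_2) :
  B *m \adj A = 0 -> exists2 v : 'rV[F]_2, v != 0 & row 0 (v 0 0 *: A + v 0 1 *: B) = 0.
Proof.
move=> BA; pose K := \matrix_(a < 2) (if a == 0 then row 0 A else row 0 B).
have /det0P[v nz_v vK] : \det K == 0.
  have := congr1 (fun M : 'M_2 => M 0 1) BA; rewrite [RHS]mxE => <-.
  by rewrite det_mx2 adj_mx2 /mxtrace !(big_ord2, mxE) /=; apply/eqP; ring.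
exists v => //; apply/rowP => k; have /rowP/(_ k) := vK.
by rewrite !(big_ord2, mxE).
Qed.

Lemma submx_rank_geq (F : fieldType) m1 m2 n (A : 'M[F]_(m1, n)) (B : 'M_(m2, n)) :
  (A <= B)%MS -> (\rank B <= \rank A)%N -> (B <= A)%MS.
Proof. by move=> sAB rBA; rewrite -(mxrank_leqif_sup sAB).2 eqn_leq mxrankS. Qed.

Lemma mxrank_le1_factor (F : fieldType) m n (A : 'M[F]_(m, n)) :
  (\rank A <= 1)%N -> exists (u : 'cV_m) (v : 'rV_n), A = u *m v.
Proof.
move=> rA; have [->|/rowV0Pn[v vA nz_v]] := eqVneq A 0.
  by exists 0, 0; rewrite mul0mx.
have Av : (A <= v)%MS by apply: submx_rank_geq; rewrite // rank_rV nz_v.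
by exists (A *m pinvmx v), v; rewrite mulmxKpV.
Qed.

Lemma mx2_det0_factor (F : fieldType) (A : 'M[F]_2) :
  \det A = 0 -> exists (u : 'cV_2) (v : 'rV_2), A = u *m v.
Proof.
move=> dA; apply: mxrank_le1_factor.
have : ~~ row_free A by rewrite row_free_unit unitmxE dA unitr0.
by rewrite /row_free; move: (rank_leq_row A); case: (\rank A) => [|[|[|]]].
Qed.

Lemma poly_eq0_horner (R : numDomainType) (p : {poly R}) :
  (forall t, p.[t] = 0) -> p = 0.
Proof.
move=> p0; apply/eqP/negPn/negP => nz_p.
pose rs := [seq (k%:R : R) | k <- iota 0 (size p)].
have rs_roots : all (root p) rs by apply/allP => t _; apply/rootP.
have rs_uniq : uniq rs.
  by rewrite map_inj_uniq ?iota_uniq // => m k /eqP; rewrite eqr_nat => /eqP.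
by have := max_poly_roots nz_p rs_roots rs_uniq; rewrite size_map size_iota ltnn.
Qed.

Lemma horner_mmap (R : comRingType) n (p : {mpoly R[n]}) (h : 'I_n -> {poly R}) t :
  (mmap polyC h p).[t] = p.@[fun k => (h k).[t]].
Proof.
rewrite /mmap /meval /mmap horner_sum; apply: eq_bigr => m _.
rewrite /mmap1 hornerM hornerC horner_prod; congr (_ * _).
by apply: eq_bigr => k _; rewrite horner_exp.
Qed.

Section Spin.
Variables (R : comRingType) (j : R).
Implicit Types (x y : 'rV[R]_4) (M : 'M[R]_2).

Definition spin x : 'M[R]_2 :=
  \matrix_(a, c) [:: x 0 0 + j * x 0 1; x 0 2 + j * x 0 3;
                     j * x 0 3 - x 0 2; x 0 0 - j * x 0 1]`_(a * 2 + c).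

Definition unspin (h : R) M : 'rV[R]_4 :=
  \row_(k < 4) (h * [:: M 0 0 + M 1 1; j * (M 1 1 - M 0 0);
                       M 0 1 - M 1 0; - j * (M 0 1 + M 1 0)]`_k).

Fact spin_is_linear : linear spin.
Proof.
by move=> a x y; apply/matrixP => b c; have [->|->] := ord2P b; have [->|->] := ord2P c;
  rewrite !mxE /=; ring.
Qed.

HB.instance Definition _ := GRing.isLinear.Build R 'rV[R]_4 'M[R]_2 *:%R spin spin_is_linear.

Hypothesis jj : j * j = -1.

Lemma tr_adj_spin x y : \tr (\adj (spin x) *m spin y) = 2 * \sum_k x 0 k * y 0 k.
Proof. by rewrite adj_mx2 big_ord4 /mxtrace !(big_ord2, mxE) /=; ring: jj. Qed.

Lemma det_spin x : \det (spin x) = \sum_k x 0 k * x 0 k.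
Proof. by rewrite det_mx2 big_ord4 !mxE /=; ring: jj. Qed.

Variables (h : R) (h2 : h *+ 2 = 1).

Lemma spinK : cancel (unspin h) spin.
Proof.
by move=> M; apply/matrixP => a c; have [->|->] := ord2P a; have [->|->] := ord2P c;
  rewrite !mxE /=; ring: jj h2.
Qed.

Lemma unspinK : cancel spin (unspin h).
Proof.
by move=> x; apply/rowP => k; rewrite !mxE; case: (ord4P k) => ->; rewrite /=; ring: jj h2.
Qed.

End Spin.

Section SpinMorphism.
Variables (R S : comRingType) (f : {rmorphism R -> S}) (j : R).

Lemma map_spin x : map_mx f (spin j x) = spin (f j) (map_mx f x).
Proof.
by apply/matrixP => a c; have [->|->] := ord2P a; have [->|->] := ord2P c;
  rewrite !mxE /= !(rmorphD, rmorphN, rmorphM).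
Qed.

Lemma map_unspin h M : map_mx f (unspin j h M) = unspin (f j) (f h) (map_mx f M).
Proof.
by apply/rowP => k; rewrite !mxE; case: (ord4P k) => ->;
  rewrite /= !(rmorphD, rmorphN, rmorphM).
Qed.

End SpinMorphism.

Section RowPairs.
Variables (F : fieldType) (n : nat).
Implicit Types (u v w : 'rV[F]_n) (a c : F).

Lemma sub_adds_rV u v w : (w <= u + v)%MS -> exists a c, w = a *: u + c *: v.
Proof.
case/sub_addsmxP => [[D1 D2]] /= ->; exists (D1 0 0), (D2 0 0).
by rewrite {1}(mx11_scalar D1) {1}(mx11_scalar D2) !mul_scalar_mx.
Qed.

Lemma rank_adds_rV u v : u != 0 -> ~~ (v <= u)%MS -> \rank (u + v)%MS = 2.
Proof.
move=> nz_u vu; apply/eqP; rewrite eqn_leq; apply/andP; split.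
  apply: leq_trans (mxrank_adds_leqif u v).1 _.
  by rewrite !rank_rV; case: (u != 0); case: (v != 0).
have : (u < u + v)%MS.
  by rewrite ltmxE addsmxSl; apply: contra vu; apply: submx_trans (addsmxSr u v).
by move/rank_ltmx; rewrite rank_rV nz_u.
Qed.

Lemma rV_indep u v a c :
  u != 0 -> ~~ (v <= u)%MS -> a *: u + c *: v = 0 -> a = 0 /\ c = 0.
Proof.
move=> nz_u vu uv0; have c0 : c = 0.
  apply/eqP; apply: contraNT vu => nz_c; apply/sub_rVP; exists (- (c^-1 * a)).
  have cv : c *: v = - (a *: u) by apply/eqP; rewrite -addr_eq0 addrC uv0 eqxx.
  by rewrite -[v](scalerK nz_c) cv scalerN scalerA scaleNr.
move: uv0; rewrite c0 scale0r addr0 => /eqP; rewrite scaler_eq0 (negPf nz_u) orbF.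
by move/eqP.
Qed.

End RowPairs.

Section Spinor.
Variable R : realType.
Local Notation C := R[i].
Implicit Types (b : bool) (a c : C) (x y z : 'rV[C]_4).

Lemma half_twice : (2^-1 : C) *+ 2 = 1.
Proof. by field. Qed.

(* Transposition exchanges the two rulings of the quadric. *)
Definition spinor b x : 'M[C]_2 := if b then spin 'i x else (spin 'i x)^T.

(* For x != 0 isotropic: y lies in the plane of family b through x. *)
Definition incident b x y := \adj (spinor b x) *m spinor b y == 0.

Lemma spinor_negb b x : spinor (~~ b) x = (spinor b x)^T.
Proof. by case: b; rewrite /spinor ?trmxK. Qed.

Fact spinor_is_linear b : linear (spinor b).
Proof. by case: b => a x y; rewrite /spinor !linearP. Qed.

HB.instance Definition _ b :=
  GRing.isLinear.Build C 'rV[C]_4 'M[C]_2 *:%R (spinor b) (spinor_is_linear b).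

Lemma spinor_eq0 b x : spinor b x = 0 -> x = 0.
Proof.
move=> sx0; rewrite -(unspinK (mulCii C) half_twice x); have -> : spin 'i x = 0.
  by case: b sx0; rewrite /spinor // => /(congr1 trmx); rewrite trmxK trmx0.
by apply/rowP => k; rewrite !mxE; case: (ord4P k) => ->; rewrite /=; ring.
Qed.

Lemma det_spinor b x : \det (spinor b x) = bform x x.
Proof. by case: b; rewrite /spinor ?det_tr (det_spin (mulCii C)). Qed.

Lemma tr_adj_spinor b x y : \tr (\adj (spinor b x) *m spinor b y) = 2 * bform x y.
Proof.
have -> : \tr (\adj (spinor b x) *m spinor b y) = \tr (\adj (spin 'i x) *m spin 'i y).
  by case: b; last rewrite /spinor -trmx_adj -trmx_mul mxtrace_tr mxtrace_mulC.
by rewrite (tr_adj_spin (mulCii C)).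
Qed.


Lemma bform_cone_polar y z :
  in_cone y -> in_cone z -> in_cone (y + z) -> bform y z = 0.
Proof.
rewrite /in_cone => yy zz.
have -> : bform (y + z) (y + z) = bform y y + 2 * bform y z + bform z z.
  by rewrite /bform !big_ord4 !mxE; ring.
rewrite yy zz add0r addr0.
by move/eqP; rewrite mulf_eq0 pnatr_eq0 => /eqP.
Qed.

Lemma incident_refl b x : in_cone x -> incident b x x.
Proof. by move=> xx; rewrite /incident mul_adj_mx det_spinor xx raddf0. Qed.

Lemma incident_lin b a c x y z :
  incident b x y -> incident b x z -> incident b x (a *: y + c *: z).
Proof.
rewrite /incident !linearP /= !linearZ /= => /eqP xy /eqP xz.
by rewrite xy xz !scaler0 addr0 eqxx.
Qed.

Lemma null_pair_incident x y :
  in_cone x -> in_cone y -> bform x y = 0 -> incident true x y || incident false x y.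
Proof.
move=> xx yy xy; have := det_spinor true x; have := det_spinor true y.
have := tr_adj_spinor true x y; rewrite xx yy xy mulr0 /incident /=.
move=> tr0 dy dx; case: (mx2_null_pair dx dy tr0) => [-> | yx]; first by rewrite eqxx.
by rewrite -trmx_adj -trmx_mul yx trmx0 eqxx orbT.
Qed.

Lemma incident_cone b x y : x != 0 -> incident b x y -> in_cone y.
Proof.
move=> nz_x /eqP xy; rewrite /in_cone -(det_spinor b); apply: mx2_adj_mulmx_det0 xy.
by apply: contraNneq nz_x => /spinor_eq0 ->.
Qed.

Lemma incident_orthogonal b x y z :
  x != 0 -> incident b x y -> incident b x z -> bform y z = 0.
Proof.
move=> nz_x xy xz; have := incident_cone nz_x (incident_lin 1 1 xy xz).
by rewrite !scale1r; exact: bform_cone_polar (incident_cone nz_x xy) (incident_cone nz_x xz).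
Qed.
End Spinor.

Section ConePlanes.
Variable R : realType.
Local Notation C := R[i].
Implicit Types (b : bool) (x z u v w : 'rV[C]_4) (W : 'M[C]_4).

Lemma cone_plane_orthogonal W u v :
  cone_plane W -> (u <= W)%MS -> (v <= W)%MS -> bform u v = 0.
Proof.
move=> [_ iso] uW vW.
exact: bform_cone_polar (iso _ uW) (iso _ vW) (iso _ (addmx_sub uW vW)).
Qed.

Lemma cone_plane_perp W z :
  cone_plane W -> (forall w, (w <= W)%MS -> bform z w = 0) -> (z <= W)%MS.
Proof.
move=> hW zW; have bform_rows (u : 'rV[C]_4) j : (u *m W^T) 0 j = bform u (row j W).
  by rewrite !mxE; apply: eq_bigr => k _; rewrite !mxE.
have WK : (W <= kermx W^T)%MS.
  rewrite sub_kermx; apply/eqP/row_matrixP => i; apply/rowP => j.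
  by rewrite row_mul bform_rows !mxE (cone_plane_orthogonal hW (row_sub i W) (row_sub j W)).
have KW : (kermx W^T <= W)%MS by apply: submx_rank_geq WK _; rewrite mxrank_ker mxrank_tr hW.1.
apply: submx_trans _ KW; rewrite sub_kermx; apply/eqP/rowP => j.
by rewrite bform_rows [RHS]mxE (zW _ (row_sub j W)).
Qed.

Lemma cone_plane_basis W x :
  \rank W = 2 -> (x <= W)%MS -> x != 0 ->
  exists y, [/\ (y <= W)%MS, ~~ (y <= x)%MS &
                forall w, (w <= W)%MS -> exists a c, w = a *: x + c *: y].
Proof.
move=> rW xW nz_x; have /row_subPn[i Wi] : ~~ (W <= x)%MS.
  by apply/negP => /mxrankS; rewrite rW rank_rV nz_x.
have Wxy : (W <= x + row i W)%MS.
  by apply: submx_rank_geq; rewrite ?addsmx_sub ?xW ?row_sub ?rank_adds_rV ?rW.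
by exists (row i W); split=> [|//|w /submx_trans/(_ Wxy)/sub_adds_rV]; first exact: row_sub.
Qed.


Definition ref_plane b : 'M[C]_4 :=
  (\row_k [:: 1; 'i; 0; 0]`_k + \row_k [:: 0; 0; 1; if b then 'i else - 'i]`_k)%MS.

Lemma ref_plane_row0 b z : (z <= ref_plane b)%MS -> row 0 (spinor b z) = 0.
Proof.
case/sub_adds_rV => [a [c ->]]; apply/rowP => k.
by have [->|->] := ord2P k; case: b; rewrite !mxE /=; ring: (mulCii C).
Qed.

Lemma ref_plane_cone b : cone_plane (ref_plane b).
Proof.
split; last by move=> z /ref_plane_row0/det_mx2_row0; rewrite det_spinor.
apply: rank_adds_rV.
  by apply/eqP => /rowP/(_ 0); rewrite !mxE /=; apply/eqP; rewrite oner_eq0.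
by apply/negP => /sub_rVP[a /rowP/(_ 2)]; rewrite !mxE /= mulr0; apply/eqP; rewrite oner_eq0.
Qed.

Lemma ref_planeP b z : reflect (row 0 (spinor b z) = 0) (z <= ref_plane b)%MS.
Proof.
apply: (iffP idP) => [|z0]; first exact: ref_plane_row0.
apply: cone_plane_perp (ref_plane_cone b) _ => w /ref_plane_row0 w0.
have := tr_adj_spinor b z w; rewrite (adj_mulmx_row0_eq0 z0 w0) mxtrace0.
by move/esym/eqP; rewrite mulf_eq0 pnatr_eq0 => /eqP.
Qed.

Lemma ref_plane_incident b p q :
  (p <= ref_plane b)%MS -> (q <= ref_plane b)%MS -> incident b p q.
Proof.
move=> /ref_plane_row0 p0 /ref_plane_row0 q0.
by rewrite /incident (adj_mulmx_row0_eq0 p0 q0) eqxx.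
Qed.

Lemma ref_plane_meet b x y :
  incident (~~ b) x y ->
  exists2 v : 'rV[C]_2, v != 0 & ((v 0 0 *: x + v 0 1 *: y)%R <= ref_plane b)%MS.
Proof.
rewrite /incident !spinor_negb -trmx_adj -trmx_mul => /eqP/(congr1 trmx).
rewrite trmxK trmx0 => /mx2_row0_dependent[v nz_v v0].
by exists v => //; apply/ref_planeP; rewrite linearD !linearZ.
Qed.

Lemma gen_family_incident b W x w :
  gen_family (ref_plane b) W -> (x <= W)%MS -> x != 0 -> (w <= W)%MS -> incident b x w.
Proof.
move=> [hW even] xW nz_x wW; have [y [yW yx span]] := cone_plane_basis hW.1 xW nz_x.
suff xy : incident b x y.
  by have [a [c ->]] := span w wW; apply: incident_lin xy; apply: incident_refl; apply: hW.2.
(* Otherwise W is in the opposite family and meets ref_plane b in a line. *)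
apply/contraT => nxy; case/negP: even.
have xy' : incident (~~ b) x y.
  have := null_pair_incident (hW.2 x xW) (hW.2 y yW) (cone_plane_orthogonal hW xW yW).
  by case: b nxy => /negPf->; rewrite ?orbF.
have rank_le2 : (\rank (W :&: ref_plane b) <= 2)%N.
  by apply: leq_trans (mxrankS (capmxSl W _)) _; rewrite hW.1.
have rank_neq2 : \rank (W :&: ref_plane b) != 2.
  apply: contra nxy => /eqP r2; have WP : (W <= ref_plane b)%MS.
    apply: submx_trans (capmxSr W _).
    by apply: submx_rank_geq (capmxSl _ _) _; rewrite r2 hW.1.
  exact: ref_plane_incident (submx_trans xW WP) (submx_trans yW WP).
have rank_neq0 : \rank (W :&: ref_plane b) != 0.
  have [v nz_v vP] := ref_plane_meet xy'.
  rewrite mxrank_eq0; apply/rowV0Pn; exists (v 0 0 *: x + v 0 1 *: y).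
    by rewrite sub_capmx vP addmx_sub ?scalemx_sub.
  apply: contra nz_v => /eqP/(rV_indep nz_x yx)[v0 v1].
  by apply/eqP/rowP => k; have [->|->] := ord2P k; rewrite mxE.
by move: rank_le2 rank_neq2 rank_neq0; case: (\rank _) => [|[|[|]]].
Qed.

Lemma gen_family_sub b W x z :
  gen_family (ref_plane b) W -> (x <= W)%MS -> x != 0 -> incident b x z -> (z <= W)%MS.
Proof.
move=> hW xW nz_x xz; apply: cone_plane_perp hW.1 _ => w wW.
exact: incident_orthogonal nz_x xz (gen_family_incident hW xW nz_x wW).
Qed.
End ConePlanes.

Section PolynomialPaths.
Variable R : realType.
Local Notation C := R[i].
Implicit Types (x : 'rV[C]_4) (G : 'I_4 -> {mpoly C[4]}).

Lemma unspin_cone (M : 'M[C]_2) : \det M = 0 -> in_cone (unspin 'i 2^-1 M).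
Proof.
move=> dM; rewrite /in_cone; transitivity (\det (spin 'i (unspin 'i 2^-1 M))).
  by rewrite (det_spin (mulCii C)).
by rewrite (spinK (mulCii C) (half_twice R)).
Qed.

Lemma cone_polypath x0 x1 :
  in_cone x0 -> in_cone x1 ->
  exists X : 'rV[{poly C}]_4,
    [/\ map_mx (horner_eval 0) X = x0, map_mx (horner_eval 1) X = x1
      & forall t, in_cone (map_mx (horner_eval t) X)].
Proof.
move=> x0c x1c.
have [u0 [v0 e0]] : exists (u : 'cV_2) (v : 'rV_2), spin 'i x0 = u *m v.
  by apply: mx2_det0_factor; rewrite (det_spin (mulCii C)).
have [u1 [v1 e1]] : exists (u : 'cV_2) (v : 'rV_2), spin 'i x1 = u *m v.
  by apply: mx2_det0_factor; rewrite (det_spin (mulCii C)).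
pose lerp m n (a c : 'M[C]_(m, n)) := map_mx polyC a + 'X *: map_mx polyC (c - a).
have ev_lerp m n (a c : 'M[C]_(m, n)) t :
    map_mx (horner_eval t) (lerp m n a c) = a + t *: (c - a).
  by apply/matrixP => k l; rewrite !mxE horner_evalE !hornerE.
exists (unspin 'i%:P 2^-1%:P (lerp _ _ u0 u1 *m lerp _ _ v0 v1)).
have evX t : map_mx (horner_eval t) (unspin 'i%:P 2^-1%:P (lerp _ _ u0 u1 *m lerp _ _ v0 v1))
    = unspin 'i 2^-1 ((u0 + t *: (u1 - u0)) *m (v0 + t *: (v1 - v0))).
  by rewrite map_unspin map_mxM !ev_lerp /= !horner_evalE !hornerC.
split=> [||t]; rewrite evX.
- by rewrite !scale0r !addr0 -e0 (unspinK (mulCii C) (half_twice R)).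
- by rewrite !scale1r (addrC u0) (addrC v0) !subrK -e1 (unspinK (mulCii C) (half_twice R)).
- exact/unspin_cone/det_mx2_col_row.
Qed.

Definition null_on_cone G :=
  forall x, in_cone x -> bform x (polymap_eval G x) = 0 /\ in_cone (polymap_eval G x).

Lemma incident_path G x0 x1 :
  null_on_cone G -> in_cone x0 -> in_cone x1 ->
  incident true x0 (polymap_eval G x0) || incident false x1 (polymap_eval G x1).
Proof.
move=> hG x0c x1c; have [X [X0 X1 Xc]] := cone_polypath x0c x1c.
pose N := \row_k mmap polyC (fun l => X 0 l) (G k).
have evN t : map_mx (horner_eval t) N = polymap_eval G (map_mx (horner_eval t) X).
  by apply/rowP => k; rewrite !mxE horner_evalE horner_mmap; apply: meval_eq => l; rewrite mxE.
have ev_spin t Y :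
    map_mx (horner_eval t) (spin 'i%:P Y) = spinor true (map_mx (horner_eval t) Y).
  by rewrite map_spin /= horner_evalE hornerC.
set A := spin 'i%:P X; set B := spin 'i%:P N.
have dA : \det A = 0.
  by apply: poly_eq0_horner => t; rewrite -horner_evalE -det_map_mx ev_spin det_spinor Xc.
have dB : \det B = 0.
  apply: poly_eq0_horner => t; rewrite -horner_evalE -det_map_mx ev_spin det_spinor evN.
  exact: (hG _ (Xc t)).2.
have tAB : \tr (\adj A *m B) = 0.
  apply: poly_eq0_horner => t; rewrite -horner_evalE -trace_map_mx map_mxM map_mx_adj.
  by rewrite !ev_spin evN tr_adj_spinor (hG _ (Xc t)).1 mulr0.
have [AB|BA] := mx2_null_pair dA dB tAB; [apply/orP; left | apply/orP; right].
  by rewrite /incident -X0 -evN -!ev_spin -map_mx_adj -map_mxM -/A -/B AB map_mx0 eqxx.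
rewrite /incident -X1 -evN -[false]/(~~ true) !spinor_negb -!ev_spin.
by rewrite -trmx_adj -trmx_mul -map_mx_adj -map_mxM -/A -/B BA map_mx0 trmx0 eqxx.
Qed.

Lemma cone_incident_side G :
  null_on_cone G -> exists b, forall x, in_cone x -> incident b x (polymap_eval G x).
Proof.
move=> hG; case: (classic (forall x, in_cone x -> incident true x (polymap_eval G x))).
  by exists true.
move=> /not_all_ex_not[x0 /(@imply_to_and (in_cone x0))[x0c nx0]].
exists false => x1 x1c.
by have := incident_path hG x0c x1c; case: (incident true x0 _) nx0.
Qed.

End PolynomialPaths.

Theorem mainTheorem10 (R : realType) (d : nat) (G : 'I_4 -> {mpoly R[i][4]}) :
  (forall k : 'I_4, G k \is d.-homog) ->
  (forall x : 'rV[R[i]]_4, in_cone x ->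
     bform x (polymap_eval G x) = 0 /\
     bform (polymap_eval G x) (polymap_eval G x) = 0) ->
  exists P0 : 'M[R[i]]_4, cone_plane P0 /\
    forall x : 'rV[R[i]]_4, x != 0 -> in_cone x ->
      forall W : 'M[R[i]]_4, gen_family P0 W -> (x <= W)%MS ->
        (polymap_eval G x <= W)%MS.
Proof.
move=> _ hG; have [b hb] := cone_incident_side hG.
exists (ref_plane R b); split=> [|x nz_x xc W hW xW]; first exact: ref_plane_cone.
exact: gen_family_sub hW xW nz_x (hb x xc).
Qed.
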